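(* Let $\{A,T',U',R,Q\}$ be a data set for the relaxed commutant lifting problem, let $\mathcal{F}=\overline{D_AQ\mathcal{H}_0}\subseteq\mathcal{D}_A$, and set $\mathcal{G}=\mathcal{D}_A\ominus\mathcal{F}$. Then $\overline{D_A\mathcal{G}}$ is orthogonal to both $Q\mathcal{H}_0$ and $\operatorname{Ker} D_A$. In particular, $\mathcal{F}=\mathcal{D}_A$ whenever $\overline{Q\mathcal{H}_0}\vee\operatorname{Ker}D_A=\mathcal{H}$.
   Context: $D_A=(I-A^*A)^{1/2}$ and $\mathcal{D}_A=\overline{D_A\mathcal{H}}$. For subspaces $\mathcal{M}_1,\mathcal{M}_2$, $\mathcal{M}_1\vee\mathcal{M}_2$ is the closed linear span. For a subspace $\mathcal{V}$ of a Hilbert space $\mathcal{W}$, $\Pi_{\mathcal{V}}$ denotes the orthogonal projection of $\mathcal{W}$ onto $\mathcal{V}$. A data set $\{A,T',U',R,Q\}$ consists of: a contraction $A:\mathcal{H}\to\mathcal{H}'$; a contraction $T'$ on $\mathcal{H}'$; a minimal isometric lifting $U'$ of $T'$, i.e. an isometry $U'$ on a Hilbert space $\mathcal{K}'\supseteq\mathcal{H}'$ such that $\mathcal{H}'$ is cyclic for $U'$ and $\Pi_{\mathcal{H}'}U'=T'\Pi_{\mathcal{H}'}$; and operators $R,Q:\mathcal{H}_0\to\mathcal{H}$ with $T'AR=AQ$ and $R^*R\le Q^*Q$. *)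

From HB Require Import structures.
From mathcomp Require Import all_boot all_order all_algebra.
From mathcomp Require Import reals complex.
Set Implicit Arguments. Unset Strict Implicit. Unset Printing Implicit Defensive.
Import Order.TTheory GRing.Theory Num.Theory.
Local Open Scope ring_scope.

Section HilbertDef.
Variable R : realType.
Local Notation C := (complex R).

Definition inner_norm (V : lmodType C) (ip : V -> V -> C) (x : V) : R :=
  Num.sqrt (complex.Re (ip x x)).

Record hilbert := Hilbert {
  hsort :> lmodType C;
  hinner : hsort -> hsort -> C;
  hinnerDl : forall (a : C) (x y z : hsort),
      hinner (a *: x + y) z = a * hinner x z + hinner y z;
  hinnerC : forall x y : hsort, hinner y x = conjc (hinner x y);
  hinner_ge0 : forall x : hsort, 0 <= hinner x x;
  hinner_eq0 : forall x : hsort, hinner x x = 0 -> x = 0;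
  hcomplete : forall u : nat -> hsort,
      (forall e : R, 0 < e -> exists N : nat, forall m n : nat,
          (N <= m)%N -> (N <= n)%N -> inner_norm hinner (u m - u n) < e) ->
      exists l : hsort, forall e : R, 0 < e -> exists N : nat, forall n : nat,
          (N <= n)%N -> inner_norm hinner (u n - l) < e
}.

Definition hnorm (H : hilbert) (x : H) : R := inner_norm (@hinner H) x.

Definition hclosure (H : hilbert) (S : H -> Prop) : H -> Prop :=
  fun x => forall e : R, 0 < e -> exists s, S s /\ hnorm (x - s) < e.

Definition closed_subspace (H : hilbert) (M : H -> Prop) : Prop :=
  [/\ M 0,
      (forall (a : C) (x y : H), M x -> M y -> M (a *: x + y))
    & (forall x, hclosure M x -> M x)].

Definition cspan (H : hilbert) (S : H -> Prop) : H -> Prop :=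
  fun x => forall M, closed_subspace M -> (forall y, S y -> M y) -> M x.

Definition join_sub (H : hilbert) (M1 M2 : H -> Prop) : H -> Prop :=
  cspan (fun x => M1 x \/ M2 x).

Definition himage (H1 H2 : hilbert) (f : H1 -> H2) (S : H1 -> Prop) : H2 -> Prop :=
  fun y => exists x, S x /\ y = f x.
Definition hrange (H1 H2 : hilbert) (f : H1 -> H2) : H2 -> Prop :=
  fun y => exists x, y = f x.
Definition hker (H1 H2 : hilbert) (f : H1 -> H2) : H1 -> Prop :=
  fun x => f x = 0.

Definition orthogonal_sets (H : hilbert) (S T : H -> Prop) : Prop :=
  forall x y, S x -> T y -> hinner x y = 0.

Definition ominus (H : hilbert) (M N : H -> Prop) : H -> Prop :=
  fun x => M x /\ forall y, N y -> hinner x y = 0.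

Definition bounded_op (H1 H2 : hilbert) (f : H1 -> H2) : Prop :=
  linear f /\ exists M : R, forall x, hnorm (f x) <= M * hnorm x.

Definition contraction (H1 H2 : hilbert) (f : H1 -> H2) : Prop :=
  bounded_op f /\ forall x, hnorm (f x) <= hnorm x.

Definition isometry (H1 H2 : hilbert) (f : H1 -> H2) : Prop :=
  bounded_op f /\ forall x, hnorm (f x) = hnorm x.

Definition is_adjoint (H1 H2 : hilbert) (f : H1 -> H2) (fs : H2 -> H1) : Prop :=
  bounded_op f /\ bounded_op fs /\ forall x y, hinner (f x) y = hinner x (fs y).

(* D is the positive square root of the positive operator T,
   i.e. D is bounded, selfadjoint, positive, and D^2 = T.
   (The positive square root is unique, so this determines D.) *)
Definition is_pos_sqrt (H : hilbert) (T D : H -> H) : Prop :=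
  [/\ is_adjoint D D, forall x, 0 <= hinner (D x) x & forall x, D (D x) = T x].

(* U' on K' is a minimal isometric lifting of T' on H', where H' is
   identified with a subspace of K' through the isometric embedding J
   (so that Pi_{H'} corresponds to the adjoint Js of J). *)
Definition minimal_isometric_lifting (H' K' : hilbert) (T' : H' -> H')
    (J : H' -> K') (Js : K' -> H') (U' : K' -> K') : Prop :=
  [/\ isometry J, is_adjoint J Js, isometry U',
      (forall k, cspan (fun y => exists n (h : H'), y = iter n U' (J h)) k)
    &
      (forall k, Js (U' k) = T' (Js k))].

End HilbertDef.

(* For g in G, self-adjointness of D_A gives <D_A g, Q h> = <g, D_A Q h> = 0,
   since g is orthogonal to F, and <D_A g, k> = <g, D_A k> = 0 for k in
   Ker D_A; orthogonality to a fixed vector passes to closures.  For the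
   second part, {x | D_A x \in F} is a closed subspace (D_A is bounded)
   containing Q H_0 and Ker D_A, hence all of H, so the closure of the range
   of D_A lies in F. *)

From HB Require Import structures.
From mathcomp Require Import all_boot all_order all_algebra.
From mathcomp Require Import lra ring.
From mathcomp Require Import reals complex.
Import Order.TTheory GRing.Theory Num.Theory.
Set Implicit Arguments. Unset Strict Implicit.
Local Open Scope ring_scope.
Local Open Scope complex_scope.

Section InnerProduct.
Variables (R : realType) (H : hilbert R).
Local Notation C := (complex R).
Implicit Types (a : C) (x y z : H).

Lemma innerDl x y z : hinner (x + y) z = hinner x z + hinner y z.
Proof. by rewrite -[x]scale1r hinnerDl mul1r scale1r. Qed.

Lemma inner0l z : hinner (0 : H) z = 0.
Proof. by apply: (@addrI _ (hinner 0 z)); rewrite -innerDl !addr0. Qed.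

Lemma innerZl a x z : hinner (a *: x) z = a * hinner x z.
Proof. by rewrite -[a *: x]addr0 hinnerDl inner0l addr0. Qed.

Lemma innerBl x y z : hinner (x - y) z = hinner x z - hinner y z.
Proof. by rewrite innerDl -scaleN1r innerZl mulN1r. Qed.

Lemma inner0r z : hinner z (0 : H) = 0.
Proof. by rewrite hinnerC inner0l rmorph0. Qed.

Lemma innerZr a x z : hinner z (a *: x) = a^* * hinner z x.
Proof. by rewrite hinnerC [hinner z x]hinnerC innerZl rmorphM. Qed.

Lemma innerDr x y z : hinner z (x + y) = hinner z x + hinner z y.
Proof.
by rewrite hinnerC [hinner z x]hinnerC [hinner z y]hinnerC innerDl rmorphD.
Qed.

Lemma innerBr x y z : hinner z (x - y) = hinner z x - hinner z y.
Proof.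
by rewrite hinnerC [hinner z x]hinnerC [hinner z y]hinnerC innerBl rmorphB.
Qed.

Lemma hnorm_ge0 x : 0 <= hnorm x.
Proof. exact: sqrtr_ge0. Qed.

Lemma hnorm_sqr x : hnorm x ^+ 2 = complex.Re (hinner x x).
Proof. by rewrite sqr_sqrtr //; have := hinner_ge0 x; rewrite lecE => /andP[]. Qed.

Lemma hinnerxx x : hinner x x = (hnorm x ^+ 2)%:C.
Proof.
rewrite hnorm_sqr; have := hinner_ge0 x.
by case: (hinner x x) => p q; rewrite lecE /= => /andP[/eqP-> _].
Qed.

Lemma hnorm_eq0 x : hnorm x = 0 -> x = 0.
Proof. by move=> x0; apply: hinner_eq0; rewrite hinnerxx x0 expr0n. Qed.

Lemma hnorm0 : hnorm (0 : H) = 0.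
Proof. by rewrite /hnorm /inner_norm inner0l sqrtr0. Qed.

Lemma hnormZ (a : C) x :
  hnorm (a *: x) = Num.sqrt (complex.Re a ^+ 2 + complex.Im a ^+ 2) * hnorm x.
Proof.
rewrite [in LHS]/hnorm /inner_norm innerZl innerZr hinnerxx.
rewrite -[hnorm x in RHS](ger0_norm (hnorm_ge0 x)) -sqrtr_sqr.
by rewrite -sqrtrM ?addr_ge0 ?sqr_ge0 //; case: a => p q /=; congr Num.sqrt; ring.
Qed.

Lemma hnormD_sqr x y :
  hnorm (x + y) ^+ 2 = hnorm x ^+ 2 + hnorm y ^+ 2 + 2 * complex.Re (hinner x y).
Proof.
rewrite !hnorm_sqr innerDl !innerDr [hinner y x]hinnerC.
by case: (hinner x y) (hinner x x) (hinner y y) => p q [? ?] [? ?] /=; ring.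
Qed.

Lemma Re_hinner_le x y : complex.Re (hinner x y) <= hnorm x * hnorm y.
Proof.
set a := hnorm y; set b := hnorm x.
have [a0 b0] : 0 <= a /\ 0 <= b by split; apply: hnorm_ge0.
have key : a * b * complex.Re (hinner x y) <= a ^+ 2 * b ^+ 2.
  have := sqr_ge0 (hnorm (a%:C *: x - b%:C *: y)).
  rewrite hnorm_sqr innerBl !innerBr !innerZl !innerZr !hinnerxx -/a -/b.
  rewrite [hinner y x]hinnerC.
  by case: (hinner x y) => p q /=; nra.
have [/hnorm_eq0->|a_neq0] := eqVneq a 0; first by rewrite inner0r mulr_ge0.
have [/hnorm_eq0->|b_neq0] := eqVneq b 0; first by rewrite inner0l mulr_ge0.
have ab : 0 < a * b by rewrite mulr_gt0 // lt0r ?a_neq0 ?b_neq0.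
by rewrite -(ler_pM2l ab) [b * a]mulrC; nra.
Qed.

Lemma ler_hnormD x y : hnorm (x + y) <= hnorm x + hnorm y.
Proof.
have s0 : 0 <= hnorm x + hnorm y by rewrite addr_ge0 ?hnorm_ge0.
rewrite -ler_sqr ?nnegrE ?hnorm_ge0 // hnormD_sqr.
have := Re_hinner_le x y; nra.
Qed.

End InnerProduct.

Section Closure.
Variables (R : realType) (H : hilbert R).
Local Notation C := (complex R).
Implicit Types (S T : H -> Prop) (x y : H).

Lemma hclosure_sub S x : S x -> hclosure S x.
Proof. by move=> Sx e e0; exists x; rewrite subrr hnorm0. Qed.

Lemma hclosureS S T x :
  (forall y, S y -> T y) -> hclosure S x -> hclosure T x.
Proof. by move=> ST Sx e /Sx[s [/ST Ts xs]]; exists s. Qed.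

Lemma hclosure_id S x : hclosure (hclosure S) x -> hclosure S x.
Proof.
move=> Sx e e0; have e2 : 0 < e / 2 by rewrite divr_gt0.
have [s [/(_ _ e2)[t [St st]] xs]] := Sx _ e2.
exists t; split=> //; rewrite -(subrK s x) -addrA (splitr e).
exact: le_lt_trans (ler_hnormD _ _) (ltrD xs st).
Qed.

Lemma hclosure_orth S x y :
  (forall s, S s -> hinner s y = 0) -> hclosure S x -> hinner x y = 0.
Proof.
move=> Sy Sx.
suff : complex.Re (hinner x y) ^+ 2 + complex.Im (hinner x y) ^+ 2 <= 0.
  by case: (hinner x y) => p q /= pq0; congr (_ +i* _); nra.
set c := hinner x y; rewrite leNgt; apply/negP => c_gt0.
have K_gt0 : 0 < hnorm (c *: y) + 1 by rewrite ltr_wpDl ?hnorm_ge0.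
(* |c|^2 = Re <x - s, c y> <= |x - s| |c y|, which is small for s close to x. *)
have [s [Ss xs]] := Sx _ (divr_gt0 c_gt0 K_gt0).
rewrite ltr_pdivlMr // in xs.
have := Re_hinner_le (x - s) (c *: y).
rewrite innerZr innerBl (Sy s Ss) subr0 -/c.
have := hnorm_ge0 (x - s); have := hnorm_ge0 (c *: y).
move: (hnorm (x - s)) (hnorm (c *: y)) xs c_gt0 => u v; clear K_gt0.
by clearbody c; case: c => p q /=; nra.
Qed.

Lemma closed_subspace_hclosure S :
  S 0 -> (forall (a : C) x y, S x -> S y -> S (a *: x + y)) ->
  closed_subspace (hclosure S).
Proof.
move=> S0 Slin; split; [exact: hclosure_sub | | exact: hclosure_id].
move=> a x y Sx Sy e e0.
set k := Num.sqrt (complex.Re a ^+ 2 + complex.Im a ^+ 2).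
have k0 : 0 <= k by apply: sqrtr_ge0.
have ek : 0 < e / (2 * (k + 1)) by rewrite divr_gt0 // mulr_gt0 // ltr_wpDl.
have [s [Ss xs]] := Sx _ ek.
have [t [St yt]] := Sy _ (divr_gt0 e0 (ltr0Sn _ 1)).
exists (a *: s + t); split; first exact: Slin.
rewrite opprD addrACA -scalerBr.
apply: le_lt_trans (ler_hnormD _ _) _; rewrite hnormZ -/k.
rewrite ltr_pdivlMr ?mulr_gt0 ?ltr_wpDl // in xs.
have := hnorm_ge0 (x - s); lra.
Qed.

End Closure.

Section Operators.
Variables (R : realType) (H1 H2 H3 : hilbert R).

Lemma linear_fun0 (f : H1 -> H2) : linear f -> f 0 = 0.
Proof.
by move=> lf; have := lf (-1) 0 0; rewrite scaleN1r oppr0 addr0 scaleN1r addNr.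
Qed.

Lemma linear_funB (f : H1 -> H2) u v : linear f -> f (u - v) = f u - f v.
Proof. by move=> lf; rewrite addrC -scaleN1r lf scaleN1r addrC. Qed.

Lemma linear_fun_comp (f : H1 -> H2) (g : H2 -> H3) :
  linear f -> linear g -> linear (fun x => g (f x)).
Proof. by move=> lf lg a u v; rewrite lf lg. Qed.

Lemma bounded_op_pos (f : H1 -> H2) : bounded_op f ->
  exists2 B : R, 0 < B & forall x, hnorm (f x) <= B * hnorm x.
Proof.
move=> [_ [M fM]]; exists (`|M| + 1) => [|x]; first by rewrite ltr_wpDl.
apply: le_trans (fM x) _; rewrite ler_wpM2r ?hnorm_ge0 //.
by have := ler_norm M; lra.
Qed.

Lemma hclosure_image (f : H1 -> H2) (S : H1 -> Prop) (T : H2 -> Prop) x :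
  bounded_op f -> (forall y, S y -> T (f y)) -> hclosure S x -> hclosure T (f x).
Proof.
move=> bf ST Sx e e0; have [B B0 fB] := bounded_op_pos bf.
have [s [Ss xs]] := Sx _ (divr_gt0 e0 B0).
exists (f s); split; first exact: ST.
rewrite -linear_funB; last by case: bf.
by apply: le_lt_trans (fB _) _; rewrite -ltr_pdivlMl // mulrC.
Qed.

Lemma closed_subspace_preimage (f : H1 -> H2) (M : H2 -> Prop) :
  bounded_op f -> closed_subspace M -> closed_subspace (fun x => M (f x)).
Proof.
move=> bf [M0 Mlin Mcl]; have [lf _] := bf.
split=> [|a x y Mx My|x Mx]; first by rewrite linear_fun0.
  by rewrite lf; apply: Mlin.
by apply: Mcl; apply: hclosure_image bf _ Mx.
Qed.

Lemma closed_subspace_hclosure_range (f : H1 -> H2) :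
  linear f -> closed_subspace (hclosure (hrange f)).
Proof.
move=> lf; apply: closed_subspace_hclosure; first by exists 0; rewrite linear_fun0.
by move=> a _ _ [u ->] [v ->]; exists (a *: u + v); rewrite lf.
Qed.

Lemma orthogonal_hclosure_adjoint (D : H1 -> H2) (Ds : H2 -> H1)
    (S : H1 -> Prop) (T : H2 -> Prop) :
  is_adjoint D Ds -> (forall x y, S x -> T y -> hinner x (Ds y) = 0) ->
  orthogonal_sets (hclosure (himage D S)) T.
Proof.
move=> [_ [_ adj]] STo x y Sx Ty.
by apply: hclosure_orth Sx => _ [s [Ss ->]]; rewrite adj STo.
Qed.

End Operators.

Theorem lemma3p2 (R : realType) (H H' H0 K' : hilbert R)
    (A : H -> H') (As : H' -> H) (T' : H' -> H')
    (J : H' -> K') (Js : K' -> H') (U' : K' -> K')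
    (Rop Q : H0 -> H) (DA : H -> H) :
  (* the data set {A, T', U', R, Q} *)
  contraction A -> is_adjoint A As ->
  contraction T' ->
  minimal_isometric_lifting T' J Js U' ->
  bounded_op Rop -> bounded_op Q ->
  (forall h, T' (A (Rop h)) = A (Q h)) ->
  (forall h, hinner (Rop h) (Rop h) <= hinner (Q h) (Q h)) ->
  (* D_A = (I - A^* A)^{1/2} *)
  is_pos_sqrt (fun x => x - As (A x)) DA ->
  let calDA := hclosure (hrange DA) in
  let F := hclosure (hrange (fun h => DA (Q h))) in
  let G := ominus calDA F in
  let DG := hclosure (himage DA G) in
  (orthogonal_sets DG (hrange Q) /\ orthogonal_sets DG (hker DA)) /\
  ((forall x, join_sub (hclosure (hrange Q)) (hker DA) x) ->
   forall x, F x <-> calDA x).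
Proof.
move=> _ _ _ _ _ [lQ _] _ _ [DA_adj _ _] calDA F G DG.
have bDA : bounded_op DA by case: DA_adj.
have F_closed : closed_subspace F.
  by apply: closed_subspace_hclosure_range; apply: linear_fun_comp lQ bDA.1.
have FDAQ h : F (DA (Q h)) by apply: hclosure_sub; exists h.
split; first split.
- apply: orthogonal_hclosure_adjoint DA_adj _ => g _ [_ gF] [h ->].
  exact: gF (FDAQ h).
- by apply: orthogonal_hclosure_adjoint DA_adj _ => g y _ ->; rewrite inner0r.
move=> spanH x.
have [_ _ Fcl] := F_closed.
have DA_F y : F (DA y).
  apply: spanH y _ (closed_subspace_preimage bDA F_closed) _ => z [Qz|->].
    by apply: Fcl; apply: hclosure_image bDA _ Qz => _ [h ->].
  by case: F_closed.
split; first by apply: hclosureS => _ [h ->]; exists (Q h).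
by move=> /hclosureS Dx; apply: Fcl; apply: Dx => _ [y ->].
Qed.
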